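(* Let $k\in\mathbb{N}$ and let $u=a_1\cdots a_n$ be a word over a finite alphabet with attributes $(x_\ell,y_\ell)$. Let $i$ be the maximal position of $u$ such that $x_i+y_i>k+1$, and let $v=a_1\cdots a_{i-1}a_{i+1}\cdots a_n$, with $x'_\ell$ denoting the $x$-coordinate of position $\ell$ of $v$. Then $x'_{j-1}=x_j$ for all $j\in\{i+1,\dots,n\}$.
   Context: An X-ranker is a nonempty word over $\{\mathsf X_a : a\in A\}$, a Y-ranker a nonempty word over $\{\mathsf Y_a:a\in A\}$, length = word length. For a word $w$: $\mathsf X_a(w)$ is the smallest $a$-position, $r\mathsf X_a(w)$ the smallest $a$-position greater than $r(w)$; $\mathsf Y_a(w)$ the greatest $a$-position, $r\mathsf Y_a(w)$ the greatest $a$-position smaller than $r(w)$ (possibly undefined). The attribute of position $p$ of a word $w$ is $(x_p,y_p)$, where $x_p$ (the $x$-coordinate) is the minimal length of an X-ranker $r$ with $r(w)=p$ and $y_p$ is the minimal length of a Y-ranker $s$ with $s(w)=p$. *)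

From mathcomp Require Import all_boot.
Set Implicit Arguments. Unset Strict Implicit. Unset Printing Implicit Defensive.

(* Words over a finite alphabet A are sequences [w : seq A]; positions are
   1-indexed: position p (1 <= p <= size w) carries the letter nth _ w p.-1.
   A ranker X_{a1} ... X_{am} (resp. Y_{a1} ... Y_{am}) is represented by the
   nonempty sequence of letters [a1; ...; am], read left to right. *)

Section Rankers.
Variable A : finType.
Implicit Types (w r : seq A) (a : A).

Definition nextX w a (q : nat) : option nat :=
  let s := drop q w in
  let j := index a s in
  if j < size s then Some (q + j).+1 else None.

Definition prevY w a (q : nat) : option nat :=
  let s := rev (take q.-1 w) in
  let j := index a s in
  if j < size s then Some (q.-1 - j) else None.

(* X_{a1}(w) is the smallest a1-position, i.e. the smallest one > 0;
   r X_a (w) is the smallest a-position > r(w). *)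
Definition evalX w r : option nat :=
  foldl (fun o a => obind (nextX w a) o) (Some 0) r.

(* Y_{a1}(w) is the greatest a1-position, i.e. the greatest one < |w|+1;
   r Y_a (w) is the greatest a-position < r(w). *)
Definition evalY w r : option nat :=
  foldl (fun o a => obind (prevY w a) o) (Some (size w).+1) r.

Definition is_pos w (p : nat) : bool := (0 < p) && (p <= size w).

Definition xreach w p m : bool :=
  [exists r : m.-tuple A, (0 < m) && (evalX w r == Some p)].
Definition yreach w p m : bool :=
  [exists r : m.-tuple A, (0 < m) && (evalY w r == Some p)].
Lemma evalX_take w p : p <= size w -> evalX w (take p w) = Some p.
Proof.
elim: p => [|p IH] Hp; first by rewrite take0.
case: w Hp IH => [//|x0 w'] Hp IH.
rewrite (take_nth x0 Hp) /evalX foldl_rcons.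
have := IH (ltnW Hp); rewrite /evalX => ->.
rewrite [obind _ _]/= /nextX (drop_nth x0 Hp).
by rewrite [index _ _]/= eqxx addn0.
Qed.

Lemma evalY_drop w q : q <= size w -> evalY w (rev (drop q w)) = Some q.+1.
Proof.
move=> Hq; have [d Hd] : exists d, d = size w - q by eexists.
elim: d q Hq Hd => [|d IH] q Hq Hd.
  have -> : q = size w by apply/eqP; rewrite eqn_leq Hq /= -subn_eq0 -Hd.
  by rewrite drop_size.
have Hlt : q < size w by rewrite -subn_gt0 -Hd.
case: w Hq Hd IH Hlt => [//|x0 w'] Hq Hd IH Hlt.
rewrite (drop_nth x0 Hlt) rev_cons /evalY foldl_rcons.
have := IH q.+1 Hlt; rewrite /evalY => ->; last by rewrite subnS -Hd.
rewrite [obind _ _]/= /prevY [_.-1]/= (take_nth x0 Hlt) rev_rcons.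
by rewrite [index _ _]/= eqxx subn0.
Qed.

Definition xP w p : pred nat := fun m => xreach w p m || ~~ is_pos w p.
Definition yP w p : pred nat := fun m => yreach w p m || ~~ is_pos w p.

Lemma xP_ex w p : exists m, xP w p m.
Proof.
rewrite /xP; case Hp: (is_pos w p); last by exists 0; rewrite orbT.
move/andP: Hp => [H0 Hp]; exists p; rewrite orbF; apply/existsP.
have Hs : size (take p w) == p by rewrite size_take_min (minn_idPl Hp).
by exists (Tuple Hs); rewrite H0 /= evalX_take.
Qed.

Lemma yP_ex w p : exists m, yP w p m.
Proof.
rewrite /yP; case Hp: (is_pos w p); last by exists 0; rewrite orbT.
move/andP: Hp => [H0 Hp]; exists (size w - p.-1); rewrite orbF; apply/existsP.
have Hs : size (rev (drop p.-1 w)) == size w - p.-1 by rewrite size_rev size_drop.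
exists (Tuple Hs); rewrite subn_gt0 prednK // Hp /=.
by rewrite evalY_drop ?prednK // (leq_trans (leq_pred p) Hp).
Qed.

(* x-coordinate of position p of w: the minimal length of an X-ranker r
   with r(w) = p (set to 0 when p is not a position of w). *)
Definition xcoord w p : nat := ex_minn (xP_ex w p).
Definition ycoord w p : nat := ex_minn (yP_ex w p).

End Rankers.

From mathcomp Require Import all_boot zify.
Set Implicit Arguments. Unset Strict Implicit. Unset Printing Implicit Defensive.

(* The x-coordinates obey the recursion x_0 = 0 and
   x_p = 1 + min { x_q : q < p, a_p does not occur strictly between q and p },
   and position j <> i of u is position [unbump i j] of v.  Deleting i changes
   this recursion in two ways only: a witness q = i disappears, and letters
   a = a_i between q and p are no longer obstacles.  Both are harmless because
   every l > i before the next occurrence of a has x_l <= x_i: indeed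
   y_i <= y_l + 1, while x_l + y_l <= k + 1 < x_i + y_i by maximality of i. *)

Lemma index_first (T : eqType) (x0 a : T) (s : seq T) t :
  t < size s -> nth x0 s t = a -> (forall t', t' < t -> nth x0 s t' != a) ->
  index a s = t.
Proof.
move=> lt_ts st_a before_t; have a_s : a \in s by rewrite -st_a mem_nth.
apply/eqP; rewrite eqn_leq -{1}st_a index_nth //=.
by rewrite leqNgt; apply/negP => /before_t; rewrite nth_index // eqxx.
Qed.
Arguments index_first {T} x0 {a s t}.

Section Occurrences.
Variables (A : finType) (x0 : A).
Implicit Types (w : seq A) (a b : A).

Definition no_occ w a q p := forall t, q < t < p -> nth x0 w t.-1 != a.

Lemma no_occW w a q p q' p' :
  q <= q' -> p' <= p -> no_occ w a q p -> no_occ w a q' p'.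
Proof. by move=> le_qq' le_p'p nw t lt_t; apply: nw; lia. Qed.

Lemma no_occ_or_first w a q p :
  no_occ w a q p \/
  exists l, [/\ q < l < p, nth x0 w l.-1 = a & no_occ w a q l].
Proof.
elim: p => [|p [nw | [l [lt_l wl nl]]]]; first by left=> t; lia.
- have [/andP[lt_qp /eqP wp] | wp] := boolP ((q < p) && (nth x0 w p.-1 == a)).
    by right; exists p; split; first lia.
  left=> t lt_t; have [-> | ne_tp] := eqVneq t p; last by apply: nw; lia.
  by move: wp; rewrite negb_and; case/orP=> //; lia.
- by right; exists l; split=> //; lia.
Qed.

Lemma nextX_Some w a q p :
  nextX w a q = Some p <->
  [/\ q < p <= size w, nth x0 w p.-1 = a & no_occ w a q p].
Proof.
rewrite /nextX size_drop; split.
  case: ifP => // lt_i [<-]; split; first lia.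
    by rewrite /= -nth_drop nth_index // -index_mem size_drop.
  move=> t lt_t; have lt_t' : t.-1 - q < index a (drop q w) by lia.
  have := before_find x0 lt_t'; rewrite nth_drop /=.
  have -> : q + (t.-1 - q) = t.-1 by lia.
  by move=> ->.
case=> lt_p wp nw; have [t def_p] : exists t, p = (q + t).+1 by exists (p.-1 - q); lia.
rewrite {}def_p /= in lt_p wp nw *.
have -> : index a (drop q w) = t.
  have lt_t : t < size (drop q w) by rewrite size_drop; lia.
  apply: (index_first x0 lt_t); first by rewrite nth_drop.
  by move=> t' lt_t't; rewrite nth_drop; apply: (nw (q + t').+1); lia.
by rewrite ifT //; lia.
Qed.

Lemma prevY_Some w a p q :
  0 < p < q -> q <= (size w).+1 -> nth x0 w p.-1 = a -> no_occ w a p q ->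
  prevY w a q = Some p.
Proof.
move=> lt_pq le_q wp nw; rewrite /prevY.
have size_s : size (rev (take q.-1 w)) = q.-1 by rewrite size_rev size_takel //; lia.
have nth_s t : t < q.-1 -> nth x0 (rev (take q.-1 w)) t = nth x0 w (q.-1 - t.+1).
  by move=> lt_t; rewrite nth_rev size_takel ?nth_take //; lia.
have -> : index a (rev (take q.-1 w)) = q.-1 - p.
  have lt_ps : q.-1 - p < size (rev (take q.-1 w)) by rewrite size_s; lia.
  apply: (index_first x0 lt_ps).
    rewrite nth_s; last lia.
    by have -> : q.-1 - (q.-1 - p).+1 = p.-1 by lia.
  move=> t lt_t; rewrite nth_s; last lia.
  have := nw (q.-1 - t); have -> : (q.-1 - t).-1 = q.-1 - t.+1 by lia.
  by apply; lia.
by rewrite size_s ifT; [congr Some |]; lia.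
Qed.

Lemma evalX_rcons w r a : evalX w (rcons r a) = obind (nextX w a) (evalX w r).
Proof. exact: foldl_rcons. Qed.

Lemma evalY_rcons w r a : evalY w (rcons r a) = obind (prevY w a) (evalY w r).
Proof. exact: foldl_rcons. Qed.

Lemma xcoord0 w : xcoord w 0 = 0.
Proof.
rewrite /xcoord; case: ex_minnP => m _ min_m; apply/eqP; rewrite -leqn0.
by apply: min_m; rewrite /xP /is_pos ltnn orbT.
Qed.

Lemma xcoord_le w r p : p <= size w -> evalX w r = Some p -> xcoord w p <= size r.
Proof.
case: p => [|p] le_pw wr; first by rewrite xcoord0.
rewrite /xcoord; case: ex_minnP => m _; apply; apply/orP; left.
by apply/existsP; exists (in_tuple r); rewrite /= wr eqxx andbT; case: r wr.
Qed.

Lemma xcoord_witness w p :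
  p <= size w -> exists r, size r = xcoord w p /\ evalX w r = Some p.
Proof.
case: p => [|p] le_pw; first by exists [::]; rewrite xcoord0.
rewrite /xcoord; case: ex_minnP => m + _.
rewrite /xP /is_pos le_pw orbF => /existsP[r /andP[_ /eqP wr]].
by exists r; rewrite size_tuple.
Qed.

Lemma ycoord_le w r p : 0 < p <= size w -> evalY w r = Some p -> ycoord w p <= size r.
Proof.
move=> p_pos wr; rewrite /ycoord; case: ex_minnP => m _; apply; apply/orP; left.
apply/existsP; exists (in_tuple r); rewrite /= wr eqxx andbT.
case: r wr => // -[def_p]; lia.
Qed.

Lemma ycoord_witness w p :
  0 < p <= size w -> exists r, size r = ycoord w p /\ evalY w r = Some p.
Proof.
move=> p_pos; rewrite /ycoord; case: ex_minnP => m + _.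
rewrite /yP /is_pos p_pos orbF => /existsP[r /andP[_ /eqP wr]].
by exists r; rewrite size_tuple.
Qed.

Lemma xcoord_le_next w b q p :
  q < p <= size w -> nth x0 w p.-1 = b -> no_occ w b q p ->
  xcoord w p <= (xcoord w q).+1.
Proof.
move=> lt_p wp nw; have le_qw : q <= size w by lia.
have [r [<- wr]] := xcoord_witness le_qw.
have := @xcoord_le w (rcons r b) p; rewrite evalX_rcons wr /= size_rcons.
by apply; [lia | apply/nextX_Some].
Qed.

Lemma xcoord_prev w p :
  0 < p <= size w ->
  exists q, [/\ q < p, no_occ w (nth x0 w p.-1) q p & xcoord w p = (xcoord w q).+1].
Proof.
move=> p_pos; have le_pw : p <= size w by lia.
have [r [xr wr]] := xcoord_witness le_pw.
case/lastP: r xr wr => [_ [] | r b]; first lia.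
rewrite evalX_rcons size_rcons; case wr: (evalX w r) => [q|] //= xr /nextX_Some[lt_p wp nw].
exists q; rewrite wp; split=> //; first lia.
have le_qw : q <= size w by lia.
have := xcoord_le le_qw wr; have := xcoord_le_next lt_p wp nw; lia.
Qed.

Lemma ycoord_le_next w b p q :
  0 < p -> p < q <= size w -> nth x0 w p.-1 = b -> no_occ w b p q ->
  ycoord w p <= (ycoord w q).+1.
Proof.
move=> p_pos lt_pq wp nw; have q_pos : 0 < q <= size w by lia.
have [r [<- wr]] := ycoord_witness q_pos.
have := @ycoord_le w (rcons r b) p; rewrite evalY_rcons wr /= size_rcons.
by apply; [lia | apply: prevY_Some => //; lia].
Qed.

End Occurrences.

Section Deletion.
Variables (A : finType) (x0 : A) (k : nat) (u : seq A) (i : nat).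
Hypothesis i_pos : 0 < i <= size u.
Hypothesis i_big : k.+1 < xcoord u i + ycoord u i.
Hypothesis i_max : forall l, i < l <= size u -> xcoord u l + ycoord u l <= k.+1.

Let v := take i.-1 u ++ drop i u.
Let a := nth x0 u i.-1.

Lemma size_del : size v = (size u).-1.
Proof. by rewrite size_cat size_takel ?size_drop; lia. Qed.

Lemma nth_del t : 0 < t -> nth x0 v t.-1 = nth x0 u (bump i t).-1.
Proof.
move=> t_pos; rewrite nth_cat size_takel; last lia.
case: ifP => lt_ti; first by rewrite nth_take // /bump; congr nth; lia.
by rewrite nth_drop /bump; congr nth; lia.
Qed.

Lemma no_occ_unbump b q p :
  no_occ x0 u b q p -> no_occ x0 v b (unbump i q) (unbump i p).
Proof.
move=> nu t lt_t; rewrite nth_del; last lia.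
by apply: nu; move: lt_t; rewrite /bump /unbump; lia.
Qed.

Lemma no_occ_bump b q p :
  no_occ x0 v b q p -> forall t, bump i q < t < bump i p -> t != i -> nth x0 u t.-1 != b.
Proof.
move=> nv t lt_t ne_ti; rewrite -(unbumpK (_ : t \in predC1 i)) //.
by rewrite -nth_del; [apply: nv | ]; move: lt_t ne_ti; rewrite /bump /unbump; lia.
Qed.

Lemma xcoord_le_before_next_occ l :
  i < l <= size u -> no_occ x0 u a i l -> xcoord u l <= xcoord u i.
Proof.
move=> lt_il nu; have i_gt0 : 0 < i by case/andP: i_pos.
have := ycoord_le_next i_gt0 lt_il (erefl a) nu.
by have := i_max lt_il; lia.
Qed.

Section Induction.
Variable j : nat.
Hypotheses (j_pos : 0 < j <= size u) (ne_ji : j != i).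
Hypothesis IH : forall q, q < j -> q != i -> xcoord v (unbump i q) = xcoord u q.

Let b := nth x0 u j.-1.

Let nth_del_j : nth x0 v (unbump i j).-1 = b.
Proof. by rewrite nth_del ?unbumpK //; move: ne_ji; rewrite /unbump; lia. Qed.

Let unbump_j : 0 < unbump i j <= size v.
Proof. by rewrite size_del; move: ne_ji; rewrite /unbump; lia. Qed.

Lemma xcoord_del_le : xcoord v (unbump i j) <= xcoord u j.
Proof.
have step q : q < j -> q != i -> no_occ x0 u b q j ->
    xcoord v (unbump i j) <= (xcoord u q).+1.
  move=> lt_qj ne_qi nu; rewrite -IH //.
  apply: xcoord_le_next nth_del_j (no_occ_unbump nu).
  by move: unbump_j ne_qi ne_ji; rewrite /unbump; lia.
have [q [lt_qj nu xj]] := xcoord_prev x0 j_pos.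
have [eq_qi | ne_qi] := eqVneq q i; last by rewrite xj; apply: step.
subst q; have lt_ij : i < j <= size u by lia.
have [nuj | [l [lt_l ul nul]]] := no_occ_or_first x0 u a i j.
  by have := xcoord_le_before_next_occ lt_ij nuj; lia.
have lt_il : i < l <= size u by lia.
have nub : no_occ x0 u b l j by apply: no_occW nu; lia.
have := xcoord_le_before_next_occ lt_il nul.
have := step l _ _ nub; lia.
Qed.

Lemma xcoord_del_ge : xcoord u j <= xcoord v (unbump i j).
Proof.
have [q' [lt_q' nv ->]] := xcoord_prev x0 unbump_j.
rewrite nth_del_j in nv; set q := bump i q'.
have lt_qj : q < j by move: lt_q' ne_ji; rewrite /q /bump /unbump; lia.
have ne_qi : q != i by rewrite eq_sym neq_bump.
have nu := no_occ_bump nv; rewrite unbumpK // -/q in nu.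
rewrite -(bumpK i q') -/q IH //.
have [/andP[lt_qij /eqP eq_ab] | not_special] := boolP ((q < i < j) && (a == b)).
  have nuj : no_occ x0 u a i j by move=> t lt_t; rewrite eq_ab; apply: nu; lia.
  have nui : no_occ x0 u a q i by move=> t lt_t; rewrite eq_ab; apply: nu; lia.
  have lt_ij : i < j <= size u by lia.
  have lt_qi : q < i <= size u by lia.
  have := xcoord_le_before_next_occ lt_ij nuj.
  by have := xcoord_le_next lt_qi (erefl a) nui; lia.
have nub : no_occ x0 u b q j.
  move=> t lt_t; have [eq_ti | ne_ti] := eqVneq t i; last exact: nu.
  by move: not_special; rewrite eq_ti in lt_t *; rewrite lt_t.
have lt_qj' : q < j <= size u by lia.
exact: xcoord_le_next lt_qj' (erefl b) nub.
Qed.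

End Induction.

Lemma xcoord_del j : j != i -> j <= size u -> xcoord v (unbump i j) = xcoord u j.
Proof.
elim/ltn_ind: j => j IH ne_ji le_ju.
have [-> | j_pos] := posnP j; first by rewrite /unbump ltn0 subn0 !xcoord0.
have IH' q : q < j -> q != i -> xcoord v (unbump i q) = xcoord u q.
  by move=> lt_qj ne_qi; apply: IH => //; lia.
have j_pos' : 0 < j <= size u by rewrite j_pos.
by apply/eqP; rewrite eqn_leq xcoord_del_le ?xcoord_del_ge.
Qed.

End Deletion.

Theorem lemma17 (A : finType) (k : nat) (u : seq A) (i : nat) :
  0 < i <= size u ->
  k.+1 < xcoord u i + ycoord u i ->
  (forall l, i < l <= size u -> xcoord u l + ycoord u l <= k.+1) ->
  let v := take i.-1 u ++ drop i u in
  forall j, i < j <= size u -> xcoord v j.-1 = xcoord u j.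
Proof.
move=> i_pos i_big i_max v j /andP[lt_ij le_ju].
have x0 : A by move: i_pos; case: (u) => [/= ? | a _ _]; [exfalso; lia | exact: a].
have -> : j.-1 = unbump i j by rewrite /unbump lt_ij subn1.
have ne_ji : j != i by rewrite gtn_eqF.
exact (xcoord_del x0 i_pos i_big i_max ne_ji le_ju).
Qed.
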